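(* Let $\Lambda$ be a finite set. Let $\mathcal{A}$ be a point based function array over a semigroup $A$ indexed by $\Lambda$, and let $\mathcal{S}$ be a function array over a partial semigroup $S$ indexed by $\Lambda$. Let $(f,g)\colon\mathcal{A}\to\gamma\mathcal{S}$ be a homomorphism. Then for each finite set $F\subseteq A$, each $D\in f(\bullet)$ and each coloring of $S$ with finitely many colors, there exists a basic sequence $(x_n)$ in $\mathcal{S}$ of elements of $D$ on which the coloring is $F$-$\mathcal{A}$-tame.
   Context: Partial semigroup: partial operation with $(rs)t$ defined iff $r(st)$ defined, then equal. A function array over $S$ indexed by non-empty $\Lambda$, based on a set $X$, assigns to each $\lambda$ a partial function $\lambda$ from $X$ to $S$ such that for all $s_0,\dots,s_k\in S$ some $x\in X$ has all $s_i\lambda(x)$ defined ($\lambda\in\Lambda$). Total: $S$ a semigroup, all $\lambda$ everywhere defined. Point based: $X=\{\bullet\}$. For $\mathcal{S}$ based on $X$: $\gamma S$ = ultrafilters $\mathcal{U}$ on $S$ with $\{t:st\text{ defined}\}\in\mathcal{U}$ for all $s$, a semigroup with $B\in\mathcal{U}*\mathcal{V}$ iff $\{s:\{t: st\text{ defined},\ st\in B\}\in\mathcal{V}\}\in\mathcal{U}$; $\gamma X$ = ultrafilters $\mathcal{U}$ on $X$ with $\{x: s\lambda(x)\text{ defined}\}\in\mathcal{U}$ for all $s,\lambda$; $B\in\lambda(\mathcal{U})$ iff $\lambda^{-1}(B)\in\mathcal{U}$; $\gamma\mathcal{S}$ = total function array over $\gamma S$ indexed by $\Lambda$ based on $\gamma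 X$. A homomorphism $(f,g)$ between total function arrays indexed by $\Lambda$ (over $A$ based on $X$, resp. over $B$ based on $Y$): $f\colon X\to Y$, $g\colon A\to B$ semigroup homomorphism, $\lambda(f(x))=g(\lambda(x))$. A sequence $(x_n)$ in $X$ is basic if $\lambda_0(x_{n_0})\cdots\lambda_l(x_{n_l})$ is defined for all $n_0<\cdots<n_l$, $\lambda_i\in\Lambda$. With $\vee$ the operation of $A$, a coloring of $S$ is $F$-$\mathcal{A}$-tame on $(x_n)$ if among products $\lambda_0(x_{n_0})\cdots\lambda_l(x_{n_l})$ ($n_0<\dots<n_l$) with $\lambda_k(\bullet)\vee\cdots\vee\lambda_l(\bullet)\in F$ for each $k\le l$, the color depends only on $\lambda_0(\bullet)\vee\cdots\vee\lambda_l(\bullet)$. *)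

From mathcomp Require Import all_boot.
From Stdlib Require List.
Set Implicit Arguments. Unset Strict Implicit. Unset Printing Implicit Defensive.

(** Partial semigroup: mul s t = None means "st undefined".
    (rs)t defined iff r(st) defined, and then equal. *)
Definition partial_assoc (S : Type) (mul : S -> S -> option S) : Prop :=
  forall r s t : S,
    match mul r s with Some u => mul u t | None => None end =
    match mul s t with Some v => mul r v | None => None end.

Definition semigroup_assoc (A : Type) (op : A -> A -> A) : Prop :=
  forall a b c, op (op a b) c = op a (op b c).

Definition function_array (S X Lam : Type) (mul : S -> S -> option S)
  (lam : Lam -> X -> option S) : Prop :=
  forall ss : list S, ss <> nil ->
    exists x : X, forall s, List.In s ss -> forall l : Lam,
      exists y, lam l x = Some y /\ mul s y <> None.

Definition ultrafilter (T : Type) (U : (T -> Prop) -> Prop) : Prop :=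
  U (fun _ => True) /\ ~ U (fun _ => False) /\
  (forall B C : T -> Prop, U B -> (forall t, B t -> C t) -> U C) /\
  (forall B C : T -> Prop, U B -> U C -> U (fun t => B t /\ C t)) /\
  (forall B : T -> Prop, U B \/ U (fun t => ~ B t)).

Definition in_gammaS (S : Type) (mul : S -> S -> option S)
  (U : (S -> Prop) -> Prop) : Prop :=
  ultrafilter U /\ forall s, U (fun t => mul s t <> None).

Definition gamma_mul (S : Type) (mul : S -> S -> option S)
  (U V : (S -> Prop) -> Prop) : (S -> Prop) -> Prop :=
  fun B => U (fun s => V (fun t => exists u, mul s t = Some u /\ B u)).

Definition in_gammaX (S X Lam : Type) (mul : S -> S -> option S)
  (lam : Lam -> X -> option S) (U : (X -> Prop) -> Prop) : Prop :=
  ultrafilter U /\ forall (s : S) (l : Lam),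
    U (fun x => exists y, lam l x = Some y /\ mul s y <> None).

Definition gamma_lam (S X Lam : Type) (lam : Lam -> X -> option S) (l : Lam)
  (U : (X -> Prop) -> Prop) : (S -> Prop) -> Prop :=
  fun B => U (fun x => exists y, lam l x = Some y /\ B y).

(** Homomorphism (f,g) from the point based total array (A, op, pt) (pt l = l(•))
    to gamma S-array; f(•) is represented by fU. *)
Definition is_hom (S X Lam A : Type) (mul : S -> S -> option S)
  (lam : Lam -> X -> option S) (op : A -> A -> A) (pt : Lam -> A)
  (fU : (X -> Prop) -> Prop) (g : A -> (S -> Prop) -> Prop) : Prop :=
  in_gammaX mul lam fU /\
  (forall a, in_gammaS mul (g a)) /\
  (forall a b (B : S -> Prop), g (op a b) B <-> gamma_mul mul (g a) (g b) B) /\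
  (forall (l : Lam) (B : S -> Prop), gamma_lam lam l fU B <-> g (pt l) B).

(** Iterated partial product s_0 s_1 ... s_l (left to right); None if some
    factor or partial product is undefined, or if the list is empty. *)
Fixpoint oprod (S : Type) (mul : S -> S -> option S) (acc : S)
  (l : list (option S)) : option S :=
  match l with
  | nil => Some acc
  | o :: l' => match o with
               | None => None
               | Some t => match mul acc t with
                           | None => None
                           | Some u => oprod mul u l'
                           end
               end
  end.

Definition lprod (S : Type) (mul : S -> S -> option S) (l : list (option S))
  : option S :=
  match l with
  | nil => None
  | o :: l' => match o with None => None | Some s => oprod mul s l' end
  end.

Definition aprod (A : Type) (op : A -> A -> A) (l : list A) : option A :=
  match l with nil => None | a :: l' => Some (foldl op a l') end.

(** The product lam_0(x_{n_0}) ... lam_k(x_{n_k}) for terms [(n_i, lam_i)]. *)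
Definition term_prod (S X Lam : Type) (mul : S -> S -> option S)
  (lam : Lam -> X -> option S) (x : nat -> X) (t : list (nat * Lam))
  : option S :=
  lprod mul (map (fun p => lam p.2 (x p.1)) t).

Definition incr_terms (Lam : Type) (t : list (nat * Lam)) : Prop :=
  t <> nil /\ sorted ltn (map fst t).

Definition basic (S X Lam : Type) (mul : S -> S -> option S)
  (lam : Lam -> X -> option S) (x : nat -> X) : Prop :=
  forall t : list (nat * Lam), incr_terms t -> term_prod mul lam x t <> None.

Definition suffixes_in (A Lam : Type) (op : A -> A -> A) (pt : Lam -> A)
  (F : list A) (ls : list Lam) : Prop :=
  forall k, (k < size ls)%N ->
    exists a, aprod op (map pt (drop k ls)) = Some a /\ List.In a F.

Definition tame (S X Lam A C : Type) (mul : S -> S -> option S)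
  (lam : Lam -> X -> option S) (op : A -> A -> A) (pt : Lam -> A)
  (F : list A) (c : S -> C) (x : nat -> X) : Prop :=
  forall (t1 t2 : list (nat * Lam)) (s1 s2 : S),
    incr_terms t1 -> incr_terms t2 ->
    suffixes_in op pt F (map snd t1) -> suffixes_in op pt F (map snd t2) ->
    aprod op (map pt (map snd t1)) = aprod op (map pt (map snd t2)) ->
    term_prod mul lam x t1 = Some s1 -> term_prod mul lam x t2 = Some s2 ->
    c s1 = c s2.

From mathcomp Require Import all_boot.
From Stdlib Require Import Classical ClassicalEpsilon.
Set Implicit Arguments. Unset Strict Implicit. Unset Printing Implicit Defensive.

(* Pick for every [a : A] a color [col a] whose color class is [g a]-large.  The
   sequence is chosen term by term from [D], maintaining the invariant that for
   every product [p] of chosen terms and every [a] such that all suffix joins of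
   the labels of [p] followed by [a] lie in [F], the [v] with [p v] defined and
   colored [col] of that join form a [g a]-large set.  Because [g] turns joins
   into products of ultrafilters and [λ(f(•)) = g(λ(•))], the requirements on the
   next term are finitely many [f(•)]-large conditions; in particular every
   admissible product ends up colored by [col] of its join. *)

Lemma InP (T : eqType) (x : T) (s : seq T) : reflect (List.In x s) (x \in s).
Proof.
elim: s => [|y s IH]; first by constructor.
rewrite inE; apply: (iffP orP) => [[/eqP ->|/IH]|[->|/IH]]; by [left | right].
Qed.

Section Ultrafilter.

Variables (T : Type) (U : (T -> Prop) -> Prop).
Hypothesis U_uf : ultrafilter U.

Lemma uf_superset (B C : T -> Prop) : U B -> (forall t, B t -> C t) -> U C.
Proof. by case: U_uf => _ [_ [up _]]; apply: up. Qed.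

Lemma uf_full (C : T -> Prop) : (forall t, C t) -> U C.
Proof. by move=> HC; apply: (uf_superset (proj1 U_uf)). Qed.

Lemma uf_meet (B C : T -> Prop) : U B -> U C -> U (fun t => B t /\ C t).
Proof. by case: U_uf => _ [_ [_ [meet _]]]; apply: meet. Qed.

Lemma uf_nonempty (B : T -> Prop) : U B -> exists t, B t.
Proof.
move=> UB; apply: NNPP => noB; apply: (proj1 (proj2 U_uf)).
by apply: (uf_superset UB) => t Bt; apply: noB; exists t.
Qed.

Lemma uf_implies (P : Prop) (C : T -> Prop) : (P -> U C) -> U (fun t => P -> C t).
Proof.
move=> PC; case: (classic P) => [/PC UC | nP]; last by apply: uf_full => t /nP.
by apply: (uf_superset UC) => t Ct _.
Qed.

Lemma uf_forall_In (I : Type) (l : list I) (P : I -> T -> Prop) :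
  (forall i, List.In i l -> U (P i)) -> U (fun t => forall i, List.In i l -> P i t).
Proof.
elim: l => [|i l IH] UP; first by apply: uf_full => t i [].
have Ul : U (fun t => forall j, List.In j l -> P j t).
  by apply: IH => j lj; apply: UP; right.
apply: (uf_superset (uf_meet (UP i (or_introl erefl)) Ul)) => t [Pi Pl] j [<-|lj] //.
exact: Pl.
Qed.

Lemma uf_forall_mem (I : eqType) (l : seq I) (P : I -> T -> Prop) :
  (forall i, i \in l -> U (P i)) -> U (fun t => forall i, i \in l -> P i t).
Proof.
move=> UP; have /uf_forall_In UPl : forall i, List.In i l -> U (P i) by move=> i /InP /UP.
by apply: (uf_superset UPl) => t Pt i /InP /Pt.
Qed.

Lemma uf_forall_fin (I : finType) (P : I -> T -> Prop) :
  (forall i, U (P i)) -> U (fun t => forall i, P i t).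
Proof.
move=> UP; have /uf_forall_mem UPe : forall i, i \in enum I -> U (P i) by move=> i _.
by apply: (uf_superset UPe) => t Pt i; apply: Pt; rewrite mem_enum.
Qed.

Lemma uf_color_class (C : finType) (c : T -> C) : exists i, U (fun t => c t = i).
Proof.
apply: NNPP => noclass.
have Unot i : U (fun t => c t <> i).
  have [] // := proj2 (proj2 (proj2 (proj2 U_uf))) (fun t => c t = i).
  by move=> Ui; case: noclass; exists i.
apply: (proj1 (proj2 U_uf)).
by apply: (uf_superset (uf_forall_fin Unot)) => t /(_ (c t)).
Qed.

End Ultrafilter.

Lemma prefix_choice (X : Type) (P : seq X -> Prop) (Q : seq X -> X -> Prop) :
  P [::] -> (forall h, P h -> exists x, Q h x) ->
  (forall h x, P h -> Q h x -> P (rcons h x)) ->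
  exists x : nat -> X, forall n, P (mkseq x n) /\ Q (mkseq x n) (x n).
Proof.
move=> P0 PQ QP; have [x0 _] := PQ _ P0.
pose pick h := epsilon (inhabits x0) (Q h).
pose prefix n := iter n (fun h => rcons h (pick h)) [::].
have prefixP n : P (prefix n) /\ Q (prefix n) (pick (prefix n)).
  elim: n => [|n [Pn Qn]]; [have Pn := P0 | have {Qn}Pn := QP _ _ Pn Qn];
    by split; last exact: epsilon_spec (PQ _ Pn).
exists (fun n => pick (prefix n)) => n.
suff -> : mkseq (fun n => pick (prefix n)) n = prefix n by [].
by elim: n => // n IH; rewrite mkseqS IH.
Qed.

Section PartialProducts.

Variables (S X : Type) (Lam : eqType) (mul : S -> S -> option S).
Variable lam : Lam -> X -> option S.

(* [None] is read as the empty product, so this is only meaningful when the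
   first argument is a defined product or comes from an empty term. *)
Definition extend_prod (o : option S) (u : S) : option S :=
  if o is Some s then mul s u else Some u.

Lemma extend_prod_assoc (o : option S) (u v s w : S) : partial_assoc mul ->
  extend_prod o u = Some s -> mul u v = Some w -> mul s v = extend_prod o w.
Proof.
case: o => [r|] /= mul_assoc; last by case=> ->.
by move=> rus uvw; have := mul_assoc r u v; rewrite rus uvw.
Qed.

Lemma oprod_rcons (acc : S) (os : seq (option S)) (o : option S) :
  oprod mul acc (rcons os o) =
  if oprod mul acc os is Some v then (if o is Some u then mul v u else None) else None.
Proof.
elim: os acc => [|[t|] os IH] acc //=; first by case: o => // u; case: (mul acc u).
by case: (mul acc t).
Qed.

Lemma term_prod_rcons (x : nat -> X) t m l u :
  t = [::] \/ term_prod mul lam x t <> None -> lam l (x m) = Some u ->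
  term_prod mul lam x (rcons t (m, l)) = extend_prod (term_prod mul lam x t) u.
Proof.
case: t => [|[n k] t] tdef xu; rewrite /term_prod /= ?xu //.
case: tdef => //; rewrite /term_prod /= map_rcons.
by case: (lam k (x n)) => // s; rewrite oprod_rcons xu; case: (oprod _ _ _).
Qed.

Lemma eq_term_prod (x y : nat -> X) t :
  {in map fst t, x =1 y} -> term_prod mul lam x t = term_prod mul lam y t.
Proof.
move=> xy; rewrite /term_prod; congr lprod; apply/eq_in_map => e te /=.
by rewrite xy // map_f.
Qed.

End PartialProducts.

Lemma aprod_rcons (A : Type) (op : A -> A -> A) (s : seq A) (y : A) :
  semigroup_assoc op -> aprod op (rcons s y) = Some (foldr op y s).
Proof.
move=> op_assoc; case: s => [|a s] //=; congr Some.
by elim: s a => //= b s IH a; rewrite IH op_assoc.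
Qed.

Lemma sorted_ltn_rcons (s : seq nat) (y : nat) :
  sorted ltn (rcons s y) = all (ltn^~ y) s && sorted ltn s.
Proof. by rewrite !(sorted_pairwise ltn_trans) pairwise_rcons. Qed.

Section Terms.

Variable Lam : finType.

Fixpoint terms_below (n : nat) : seq (seq (nat * Lam)) :=
  if n is n'.+1 then
    terms_below n' ++ [seq rcons t (n', l) | t <- terms_below n', l <- enum Lam]
  else [:: [::]].

Lemma nil_in_terms_below n : [::] \in terms_below n.
Proof. by elim: n => // n IH; rewrite /= mem_cat IH. Qed.

Lemma terms_belowS n t : t \in terms_below n.+1 ->
  t \in terms_below n \/ exists t' l, t' \in terms_below n /\ t = rcons t' (n, l).
Proof.
rewrite /= mem_cat => /orP [|/allpairsP [[t' l] [/= t'n _ ->]]]; first by left.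
by right; exists t', l.
Qed.

Lemma terms_below_lt n t : t \in terms_below n -> {in map fst t, forall i, i < n}.
Proof.
elim: n t => [|n IH] t; first by rewrite inE => /eqP ->.
case/terms_belowS => [/IH tn i /tn /ltnW //|[t' [l [/IH t'n ->]]] i].
by rewrite map_rcons mem_rcons inE => /orP [/eqP -> //|/t'n /ltnW].
Qed.

Lemma sorted_terms_below n t :
  sorted ltn (map fst t) -> {in map fst t, forall i, i < n} -> t \in terms_below n.
Proof.
elim: n t => [|n IH] t.
  by case: t => [|e t] //= _ /(_ e.1); rewrite inE eqxx => /(_ isT).
case/lastP: t => [_ _|t [m l]]; first exact: nil_in_terms_below.
rewrite map_rcons sorted_ltn_rcons => /andP [/allP t_lt_m tsorted] lt_n.
have mn : m < n.+1 by apply: lt_n; rewrite mem_rcons mem_head.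
rewrite /= mem_cat; case: (ltngtP m n) mn => [mn _|nm|nm _].
- apply/orP; left; apply: IH.
    by rewrite map_rcons sorted_ltn_rcons tsorted andbT; apply/allP.
  move=> i; rewrite map_rcons mem_rcons inE => /orP [/eqP -> //|/t_lt_m im].
  exact: ltn_trans im mn.
- by rewrite ltnS leqNgt nm.
- apply/orP; right; apply/allpairsP; exists (t, l); rewrite mem_enum nm.
  by split => //; apply: IH => // i /t_lt_m; rewrite nm.
Qed.

Lemma sorted_in_terms_below t : sorted ltn (map fst t) -> exists n, t \in terms_below n.
Proof.
move=> tsorted; exists (\max_(i <- map fst t) i).+1.
by apply: sorted_terms_below => // i ti; rewrite ltnS; apply: leq_bigmax_seq.
Qed.

End Terms.

Section Tracking.

Variables (Lam : finType) (A : Type) (op : A -> A -> A) (pt : Lam -> A).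
Variables (S X : Type) (mul : S -> S -> option S) (lam : Lam -> X -> option S).
Variables (fU : (X -> Prop) -> Prop) (g : A -> (S -> Prop) -> Prop).
Hypothesis hom : is_hom mul lam op pt fU g.

Lemma fU_uf : ultrafilter fU.
Proof. by case: hom => [[]]. Qed.

Lemma g_uf a : ultrafilter (g a).
Proof. by case: hom => _ [/(_ a) []]. Qed.

Lemma g_defined a s : g a (fun t => mul s t <> None).
Proof. by case: hom => _ [/(_ a) [_]]. Qed.

Lemma g_op a b (B : S -> Prop) : g (op a b) B ->
  g a (fun s => g b (fun t => exists u, mul s t = Some u /\ B u)).
Proof. by case: hom => _ [_ [/(_ a b B) [] + _ _]]. Qed.

Lemma g_pt l (B : S -> Prop) :
  g (pt l) B -> fU (fun x => exists u, lam l x = Some u /\ B u).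
Proof. by case: hom => _ [_ [_ /(_ l B) []]]. Qed.

Variables (F : list A) (C : finType) (c : S -> C) (col : A -> C).
Hypothesis g_col : forall a, g a (fun s => c s = col a).
Variable x0 : X.

Definition join_pts (p : seq Lam) (a : A) : A := foldr op a (map pt p).

Definition suffix_joins_in_F (p : seq Lam) (a : A) : Prop :=
  forall k, k <= size p -> List.In (join_pts (drop k p) a) F.

Lemma suffix_joins_in_F_rcons p l b :
  suffix_joins_in_F (rcons p l) b -> suffix_joins_in_F p (op (pt l) b).
Proof.
move=> pF k kp; have := pF k; rewrite size_rcons drop_rcons //.
by rewrite /join_pts map_rcons foldr_rcons; apply; apply: leqW.
Qed.

Lemma suffix_joins_in_F_mem p a : suffix_joins_in_F p a -> List.In a F.
Proof. by move/(_ (size p) (leqnn _)); rewrite drop_size. Qed.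

Definition pprod (h : seq X) (t : seq (nat * Lam)) : option S :=
  term_prod mul lam (nth x0 h) t.

Definition target (h : seq X) (t : seq (nat * Lam)) (a : A) (v : S) : Prop :=
  exists z, extend_prod mul (pprod h t) v = Some z /\ c z = col (join_pts (map snd t) a).

Record invariant (h : seq X) : Prop := Invariant {
  inv_defined : forall t, t \in terms_below Lam (size h) -> t <> [::] ->
    pprod h t <> None;
  inv_target : forall t a, t \in terms_below Lam (size h) ->
    suffix_joins_in_F (map snd t) a -> g a (target h t a);
  inv_color : forall t m l, rcons t (m, l) \in terms_below Lam (size h) ->
    suffix_joins_in_F (map snd t) (pt l) ->
    exists z, pprod h (rcons t (m, l)) = Some z /\ c z = col (join_pts (map snd t) (pt l))
}.

Definition admissible_value (h : seq X) (t : seq (nat * Lam)) (l : Lam) (u : S) : Prop :=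
  [/\ extend_prod mul (pprod h t) u <> None,
      suffix_joins_in_F (map snd t) (pt l) -> target h t (pt l) u &
      forall b, suffix_joins_in_F (rcons (map snd t) l) b ->
        g b (fun v => exists w, mul u v = Some w /\ target h t (op (pt l) b) w)].

Definition admissible_next (D : X -> Prop) (h : seq X) (x : X) : Prop :=
  D x /\ forall t l, t \in terms_below Lam (size h) ->
    exists u, lam l x = Some u /\ admissible_value h t l u.

Lemma invariant_nil : invariant [::].
Proof.
split=> [t | t a | t m l]; rewrite /= inE => /eqP;
  [by move=> -> | move=> -> _ | by case: t].
by apply: (uf_superset (g_uf a) (g_col a)) => v cv; exists v.
Qed.

Lemma admissible_value_large h t l : invariant h -> t \in terms_below Lam (size h) ->
  g (pt l) (admissible_value h t l).
Proof.
move=> Ih th; have gU := g_uf (pt l).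
have defined : g (pt l) (fun u => extend_prod mul (pprod h t) u <> None).
  by case: (pprod h t) => [s|]; [exact: g_defined | exact: uf_full].
have last_color :
    g (pt l) (fun u => suffix_joins_in_F (map snd t) (pt l) -> target h t (pt l) u).
  by apply: uf_implies => // tF; apply: inv_target.
have next_target : g (pt l) (fun u => forall b, List.In b F ->
    suffix_joins_in_F (rcons (map snd t) l) b ->
    g b (fun v => exists w, mul u v = Some w /\ target h t (op (pt l) b) w)).
  apply: uf_forall_In => // b _; apply: uf_implies => // tlF.
  exact/g_op/(inv_target Ih th)/suffix_joins_in_F_rcons.
apply: (uf_superset gU (uf_meet gU defined (uf_meet gU last_color next_target))).
move=> u [u_def [u_col u_next]]; split=> // b tlF.
exact: u_next (suffix_joins_in_F_mem tlF) tlF.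
Qed.

Lemma admissible_next_large (D : X -> Prop) h :
  fU D -> invariant h -> fU (admissible_next D h).
Proof.
move=> fUD Ih; apply: (uf_meet fU_uf fUD).
have : fU (fun x => forall t, t \in terms_below Lam (size h) ->
    forall l, exists u, lam l x = Some u /\ admissible_value h t l u).
  apply: (uf_forall_mem fU_uf) => t th; apply: (uf_forall_fin fU_uf) => l.
  exact/g_pt/admissible_value_large.
by move/(uf_superset fU_uf); apply=> x next t l /next.
Qed.

Lemma pprod_rcons_old h x t : t \in terms_below Lam (size h) ->
  pprod (rcons h x) t = pprod h t.
Proof.
move=> th; apply: eq_term_prod => i /(terms_below_lt th) ih.
by rewrite nth_rcons ih.
Qed.

Lemma pprod_rcons_new h x t l u : invariant h -> t \in terms_below Lam (size h) ->
  lam l x = Some u ->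
  pprod (rcons h x) (rcons t (size h, l)) = extend_prod mul (pprod h t) u.
Proof.
move=> Ih th xu; rewrite -(pprod_rcons_old x th); apply: term_prod_rcons.
  case: t th => [|e t] th; [by left | right].
  by rewrite -/(pprod _ _) pprod_rcons_old //; exact: inv_defined.
by rewrite nth_rcons ltnn eqxx.
Qed.

Hypothesis mul_assoc : partial_assoc mul.

Lemma invariant_rcons D h x :
  invariant h -> admissible_next D h x -> invariant (rcons h x).
Proof.
move=> Ih [_ x_next]; split; rewrite size_rcons.
- move=> t' /terms_belowS [th | [t [l [th ->]]]].
    by rewrite pprod_rcons_old //; exact: inv_defined.
  by have [u [xu [u_def _ _]]] := x_next t l th; rewrite (pprod_rcons_new Ih th xu).
- move=> t' b /terms_belowS [th | [t [l [th ->]]]].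
    by rewrite /target pprod_rcons_old //; exact: inv_target.
  rewrite map_rcons => tlF; have [u [xu [u_def _ u_next]]] := x_next t l th.
  case E: (extend_prod mul (pprod h t) u) u_def => [s|] // _.
  apply: (uf_superset (g_uf b) (u_next b tlF)) => v [w [uvw [z [wz zcol]]]] /=.
  exists z; rewrite (pprod_rcons_new Ih th xu) E /= (extend_prod_assoc mul_assoc E uvw).
  by rewrite /join_pts !map_rcons foldr_rcons.
- move=> t0 m l /terms_belowS [th | [t [l' [th /rcons_inj [-> -> ->]]]]].
    by rewrite pprod_rcons_old //; exact: inv_color.
  move=> tF; have [u [xu [_ u_col _]]] := x_next t l' th.
  by rewrite (pprod_rcons_new Ih th xu); exact: u_col.
Qed.

Hypothesis op_assoc : semigroup_assoc op.
Variable x : nat -> X.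
Hypothesis x_inv : forall n, invariant (mkseq x n).

Lemma pprod_mkseq n t :
  t \in terms_below Lam n -> pprod (mkseq x n) t = term_prod mul lam x t.
Proof. by move=> tn; apply: eq_term_prod => i /(terms_below_lt tn); apply: nth_mkseq. Qed.

Lemma invariant_basic : basic mul lam x.
Proof.
move=> t [t_ne tsorted]; have [n tn] := sorted_in_terms_below tsorted.
by rewrite -(pprod_mkseq tn); apply: (inv_defined (x_inv n)); rewrite ?size_mkseq.
Qed.

Lemma invariant_term_prod_color t s :
  incr_terms t -> suffixes_in op pt F (map snd t) -> term_prod mul lam x t = Some s ->
  exists a, aprod op (map pt (map snd t)) = Some a /\ c s = col a.
Proof.
case/lastP: t => [[] //|t [m l]] [_ tsorted] tF ts.
have [n tn] := sorted_in_terms_below tsorted.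
have t_color : suffix_joins_in_F (map snd t) (pt l).
  move=> k kt; have := tF k; rewrite !map_rcons size_rcons ltnS drop_rcons //.
  by rewrite map_rcons aprod_rcons // => /(_ kt) [a [[<-]]].
have tn' : rcons t (m, l) \in terms_below Lam (size (mkseq x n)) by rewrite size_mkseq.
have [z [tz zcol]] := inv_color (x_inv n) tn' t_color.
exists (join_pts (map snd t) (pt l)); split; first by rewrite !map_rcons aprod_rcons.
by move: tz; rewrite pprod_mkseq // ts => -[->].
Qed.

Lemma invariant_tame : tame mul lam op pt F c x.
Proof.
move=> t1 t2 s1 s2 t1i t2i t1F t2F eq_join t1s t2s.
have [a1 [t1a1 ->]] := invariant_term_prod_color t1i t1F t1s.
have [a2 [t2a2 ->]] := invariant_term_prod_color t2i t2F t2s.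
by move: eq_join; rewrite t1a1 t2a2 => -[->].
Qed.

End Tracking.

Theorem corollary3p4
  (Lam : finType) (Lam_ne : inhabited Lam)
  (A : Type) (op : A -> A -> A) (op_assoc : semigroup_assoc op)
  (pt : Lam -> A)
  (S X : Type) (mul : S -> S -> option S) (mul_assoc : partial_assoc mul)
  (lam : Lam -> X -> option S) (arr : function_array mul lam)
  (fU : (X -> Prop) -> Prop) (g : A -> (S -> Prop) -> Prop)
  (hom : is_hom mul lam op pt fU g) :
  forall (F : list A) (D : X -> Prop), fU D ->
  forall (C : finType) (c : S -> C),
  exists x : nat -> X,
    (forall n, D (x n)) /\ basic mul lam x /\ tame mul lam op pt F c x.
Proof.
move=> F D fUD C c.
have [col g_col] : exists col : A -> C, forall a, g a (fun s => c s = col a).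
  exact: ClassicalEpsilon.choice (fun a => uf_color_class (g_uf hom a) c).
have [x0 _] := uf_nonempty (fU_uf hom) fUD.
have [x x_prefix] := prefix_choice (P := invariant op pt mul lam g F c col x0)
  (Q := admissible_next op pt mul lam g F c col x0 D) (invariant_nil hom F g_col x0)
  (fun h Ih => uf_nonempty (fU_uf hom) (admissible_next_large hom fUD Ih))
  (fun h y Ih => invariant_rcons hom mul_assoc Ih).
exists x; split; first by move=> n; have [_ [Dx _]] := x_prefix n.
have x_inv n := proj1 (x_prefix n).
by split; [exact: invariant_basic x_inv | apply: (invariant_tame op_assoc x_inv)].
Qed.
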